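(* Suppose that there exists $\lambda>1$ such that $f:\mathbb Q\to\mathbb C$ has property $\mathscr S(\lambda)$, and let $f^\ast$ be defined by $f^\ast(x)=f(x)$ for $x\in\mathbb Q$ and $f^\ast(x)=\lim_{y\in\mathbb Q\cap\mathfrak T(B),y\to x}f(y)$ for $x\in\mathfrak T(B)\setminus\mathbb Q$, $B>0$ (this limit exists and is independent of $B$). Then, as $q\to\infty$, $$f^\ast(a/q)=f^\ast(x)+o(1)$$ uniformly for all $a\in\mathfrak A_q$ and all $x\in\big(\tfrac{a-q^{1/4}}q,\tfrac{a+q^{1/4}}q\big)\cap\big(\mathfrak T_q\cup\tfrac1q\mathfrak A_q\big)$.
   Context: Continued fractions: $x=[b_0(x);b_1(x),\dots]$, $r(x)$ the length for rational $x$, $r(x)=\infty$ otherwise. $\mathfrak T(B):=\{x\in\mathbb R\colon b_j(x)\leq\max(B,j(\log j)^2)\ \forall 1\leq j\leq r(x)\}$. $V(B,m,x):=\{x'\in\mathbb Q\cap\mathfrak T(B)\colon r(x')\geq m,\ b_j(x')=b_j(x)\ \forall j\leq m\}$. Property $\mathscr S(\lambda)$: $\sup_{x\in\mathfrak T(m^\lambda)}\sup_{x',x''\in V(m^\lambda,m,x)}|f(x')-f(x'')|\to0$ as $m\to\infty$. For $q\geq2$: $\mathfrak A_q:=\{0\leq a<q\colon(a,q)=1,\ a/q\in\mathfrak T((\log q)(\log\log q)^2)\}$ and $\mathfrak T_q:=([0,1)\setminus\mathbb Q)\cap\mathfrak T((\log q)(\log\log q)^2)$; $\frac1q\mathfrak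 A_q=\{a/q\colon a\in\mathfrak A_q\}$. *)

From Stdlib Require Import Reals Lra Lia ZArith QArith Qcanon Qreals.
From Coquelicot Require Import Coquelicot.
Open Scope R_scope.

Definition qc2R (y : Qc) : R := Q2R (this y).

Definition is_rat (x : R) : Prop := exists y : Qc, x = qc2R y.

(** Continued fraction algorithm (Gauss map). [cf_rem x n] is the n-th
    complete quotient x_n of x (x_0 = x, x_{n+1} = 1/frac(x_n)), or [None]
    if the expansion has already terminated (frac(x_k) = 0 for some k < n).
    For rational x this yields the Euclidean expansion (last partial
    quotient >= 2 when r(x) >= 1); r(x) is the largest n with
    [cf_rem x n <> None], and r(x) = infinity for irrational x. *)
Fixpoint cf_rem (x : R) (n : nat) : option R :=
  match n with
  | O => Some x
  | S n' =>
      match cf_rem x n' with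
      | None => None
      | Some t => if Req_EM_T (frac_part t) 0 then None
                  else Some (/ frac_part t)
      end
  end.

Definition cf_digit (x : R) (n : nat) : option Z :=
  match cf_rem x n with
  | None => None
  | Some t => Some (Int_part t)
  end.

Definition cf_len_ge (x : R) (m : nat) : Prop := cf_rem x m <> None.

Definition inT (B x : R) : Prop :=
  forall (j : nat) (k : Z), (1 <= j)%nat -> cf_digit x j = Some k ->
    IZR k <= Rmax B (INR j * (ln (INR j)) ^ 2).

Definition inV (B : R) (m : nat) (x : R) (x' : Qc) : Prop :=
  inT B (qc2R x') /\ cf_len_ge (qc2R x') m /\
  (forall j : nat, (j <= m)%nat -> cf_digit (qc2R x') j = cf_digit x j).

Definition propS (lam : R) (f : Qc -> C) : Prop :=
  forall eps : R, 0 < eps -> exists M : nat, forall m : nat, (M <= m)%nat ->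
    forall x : R, inT (Rpower (INR m) lam) x ->
    forall x' x'' : Qc,
      inV (Rpower (INR m) lam) m x x' -> inV (Rpower (INR m) lam) m x x'' ->
      Cmod (Cminus (f x') (f x'')) <= eps.

Definition is_fstar (f : Qc -> C) (fstar : R -> C) : Prop :=
  (forall y : Qc, fstar (qc2R y) = f y) /\
  (forall B x : R, 0 < B -> inT B x -> ~ is_rat x ->
     forall eps : R, 0 < eps -> exists delta : R, 0 < delta /\
       forall y : Qc, inT B (qc2R y) -> Rabs (qc2R y - x) < delta ->
         Cmod (Cminus (f y) (fstar x)) < eps).

Definition Bq (q : nat) : R := ln (INR q) * (ln (ln (INR q))) ^ 2.

Definition inA (q a : nat) : Prop :=
  (a < q)%nat /\ Nat.gcd a q = 1%nat /\ inT (Bq q) (INR a / INR q).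

Definition inTq (q : nat) (x : R) : Prop :=
  0 <= x < 1 /\ ~ is_rat x /\ inT (Bq q) x.

Definition in_scaledA (q : nat) (x : R) : Prop :=
  exists a' : nat, inA q a' /\ x = INR a' / INR q.

(** If the complete quotients x_1, ..., x_(m+2) of x are at most K, then every y with
    |y - x| (K+1)^(2m+2) < 1 has the same first m partial quotients as x, because one step of
    the Gauss map expands distances by at most (K+1)^2 while the fractional parts stay at
    distance about 1/K from 0 and 1.  For a/q in A_q the complete quotients are bounded by
    K = B_q + (m+2)^3 + 1, Euclid's algorithm gives r(a/q) >= m+2 as soon as K^(m+2) < q, and
    m of size (log q)^θ with 1/λ < θ < 1 gives both B_q <= m^λ and (K+1)^(2m+2) <= q^(3/4).
    Hence every rational of T(B_q) in the window of radius q^(1/4)/q around a/q lies in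
    V(m^λ, m, a/q), where S(λ) makes f almost constant; irrational points of the window are
    reached through truncations of their continued fractions, which stay in T(B) and converge
    geometrically.  The same stability makes f Cauchy along rationals of T(B) tending to an
    irrational x, which yields f^*. *)

From Stdlib Require Import Reals QArith Qcanon Qreals.
From Coquelicot Require Import Coquelicot.
From Stdlib Require Import Lra Lia ZArith ClassicalEpsilon Classical.
Open Scope R_scope.

Lemma frac_part_bounds t : 0 <= frac_part t < 1.
Proof. destruct (base_fp t). lra. Qed.

Lemma Int_part_IZR_plus (z : Z) (u : R) : 0 <= u < 1 -> Int_part (IZR z + u) = z.
Proof. intros Hu. symmetry. apply Int_part_spec. lra. Qed.

Lemma frac_part_IZR_plus (z : Z) (u : R) : 0 <= u < 1 -> frac_part (IZR z + u) = u.
Proof. intros Hu. unfold frac_part. rewrite Int_part_IZR_plus by exact Hu. ring. Qed.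

Lemma Int_part_ge1 t : 1 <= t -> (1 <= Int_part t)%Z.
Proof.
  intros Ht. pose proof (frac_part_bounds t) as Hf. unfold frac_part in Hf.
  assert (Hpos : (0 < Int_part t)%Z) by (apply lt_IZR; lra). lia.
Qed.

Lemma Rinv_gt1_bounds z : 1 < z -> 0 <= / z < 1.
Proof.
  intros Hz. split; [apply Rlt_le, Rinv_0_lt_compat; lra|].
  rewrite <- Rinv_1. apply Rinv_lt_contravar; lra.
Qed.

Lemma ln_lt_id x : 0 < x -> ln x < x.
Proof.
  intros Hx. rewrite <- (ln_exp x) at 2. apply ln_increasing; [exact Hx|].
  pose proof (exp_ineq1_le x). pose proof (exp_pos x). lra.
Qed.

Lemma ln_nonneg x : 1 <= x -> 0 <= ln x.
Proof. intros Hx. rewrite <- ln_1. apply ln_le; lra. Qed.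

Lemma Rpower_ge_base (m : nat) lam : (1 <= m)%nat -> 1 <= lam -> INR m <= Rpower (INR m) lam.
Proof.
  intros Hm Hl. assert (1 <= INR m) by (apply (le_INR 1); exact Hm).
  rewrite <- (Rpower_1 (INR m)) at 1 by lra. now apply Rle_Rpower.
Qed.

Lemma nat_above (A : R) : exists n : nat, A < INR n.
Proof. destruct (INR_archimed 1 A ltac:(lra)) as [n Hn]. exists n. lra. Qed.

Lemma Rinv_INR_succ_eventually_lt d : 0 < d ->
  exists N : nat, forall n, (N <= n)%nat -> / (INR n + 1) < d.
Proof.
  intros Hd. destruct (nat_above (/ d)) as [N HN]. exists N. intros n Hn.
  pose proof (le_INR N n Hn). pose proof (Rinv_0_lt_compat d Hd).
  rewrite <- (Rinv_inv d). apply Rinv_lt_contravar; [apply Rmult_lt_0_compat|]; lra.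
Qed.

Lemma C_cauchy_cv (u : nat -> C) :
  (forall eps, 0 < eps -> exists N, forall n m, (N <= n)%nat -> (N <= m)%nat ->
     Cmod (Cminus (u n) (u m)) < eps) ->
  exists L, forall eps, 0 < eps -> exists N, forall n, (N <= n)%nat ->
     Cmod (Cminus (u n) L) < eps.
Proof.
  intros Hc.
  destruct (proj1 (Hierarchy.filterlim_locally_cauchy
    (U := CompleteNormedModule.CompleteSpace _ C_CompleteNormedModule) (F := Hierarchy.eventually) u))
    as [L HL].
  { intros eps. destruct (Hc eps (cond_pos eps)) as [N HN].
    exists (fun n => (N <= n)%nat). split; [now exists N|].
    intros n m Hn Hm. apply (@norm_compat1 C_AbsRing C_NormedModule), (HN m n Hm Hn). }
  exists L. intros eps He.
  destruct (proj1 (filterlim_locally_ball_norm _ _) HL (mkposreal eps He)) as [N HN].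
  exists N. exact HN.
Qed.

Lemma nat_ceil (P : R) : 0 <= P -> exists m : nat, P <= INR m <= P + 1.
Proof.
  intros HP. destruct (archimed P) as [H1 H2].
  exists (Z.to_nat (up P)). rewrite INR_IZR_INZ, Z2Nat.id; [lra|].
  apply le_IZR. lra.
Qed.

Lemma Rabs_lt_of_window a r q x : (a - r) / q < x < (a + r) / q -> Rabs (x - a / q) < r / q.
Proof. unfold Rdiv. rewrite Rmult_minus_distr_r, Rmult_plus_distr_r. intros Hx. apply Rabs_def1; lra. Qed.

Lemma cf_rem_next x n t : cf_rem x n = Some t -> frac_part t <> 0 ->
  cf_rem x (S n) = Some (/ frac_part t).
Proof. intros Ht Hf. cbn [cf_rem]. rewrite Ht. destruct (Req_EM_T _ 0); congruence. Qed.

Lemma cf_rem_succ_inv x n t1 : cf_rem x (S n) = Some t1 ->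
  exists t, cf_rem x n = Some t /\ frac_part t <> 0 /\ t1 = / frac_part t.
Proof.
  cbn [cf_rem]. destruct (cf_rem x n) as [t|]; [|discriminate].
  destruct (Req_EM_T _ 0); [discriminate|]. intros H; inversion H; eauto.
Qed.

Lemma cf_rem_None_le x n k : (n <= k)%nat -> cf_rem x n = None -> cf_rem x k = None.
Proof. induction 1 as [|k _ IH]; auto. intros Hn. cbn [cf_rem]. now rewrite IH. Qed.

Lemma cf_rem_succ_gt1 x n t : cf_rem x (S n) = Some t -> 1 < t.
Proof.
  intros H. destruct (cf_rem_succ_inv _ _ _ H) as [s [_ [Hf ->]]].
  pose proof (frac_part_bounds s).
  rewrite <- Rinv_1. apply Rinv_lt_contravar; lra.
Qed.

Lemma cf_rem_gt1 x k t : (1 <= k)%nat -> cf_rem x k = Some t -> 1 < t.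
Proof. destruct k as [|k]; [lia|]. intros _. apply cf_rem_succ_gt1. Qed.

Lemma cf_rem_succ_decomp x n t t1 : cf_rem x n = Some t -> cf_rem x (S n) = Some t1 ->
  t = IZR (Int_part t) + / t1.
Proof.
  intros Ht Ht1. destruct (cf_rem_succ_inv _ _ _ Ht1) as [s [Hs [_ ->]]].
  rewrite Ht in Hs. injection Hs as ->. rewrite Rinv_inv. apply Rplus_Int_part_frac_part.
Qed.

Lemma cf_rem_of_len_ge x n k : cf_len_ge x n -> (k <= n)%nat -> exists s, cf_rem x k = Some s.
Proof.
  intros Hlen Hk. destruct (cf_rem x k) as [s|] eqn:E; [now exists s|].
  exfalso. apply Hlen. now apply (cf_rem_None_le x k).
Qed.

(** * Stability of partial quotients under perturbation *)

Lemma Int_part_perturb s t : Rabs (t - s) < frac_part s -> Rabs (t - s) < 1 - frac_part s ->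
  Int_part t = Int_part s /\ frac_part t = frac_part s + (t - s).
Proof.
  intros H1 H2. pose proof (Rle_abs (t - s)). pose proof (Rle_abs (- (t - s))).
  rewrite Rabs_Ropp in *.
  destruct (Int_part_frac_part_spec t (Int_part s) (frac_part s + (t - s))) as [E1 E2].
  - lra.
  - unfold frac_part. ring.
  - auto.
Qed.

Lemma gauss_step_stable K s t : 1 <= K ->
  / K <= frac_part s -> / (K + 1) <= 1 - frac_part s -> Rabs (t - s) * (K + 1) ^ 2 < 1 ->
  Int_part t = Int_part s /\ frac_part t <> 0 /\
  Rabs (/ frac_part t - / frac_part s) <= Rabs (t - s) * (K + 1) ^ 2.
Proof.
  intros HK Hlo Hhi Hd.
  set (d := Rabs (t - s)) in *.
  assert (Hd0 : 0 <= d) by apply Rabs_pos.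
  assert (HdK : d * (K * (K + 1)) <= 1) by nra.
  assert (HsK : 1 <= K * frac_part s).
  { apply Rmult_le_compat_l with (r := K) in Hlo; [|lra]. rewrite Rinv_r in Hlo; lra. }
  assert (HsK1 : 1 <= (K + 1) * (1 - frac_part s)).
  { apply Rmult_le_compat_l with (r := K + 1) in Hhi; [|lra]. rewrite Rinv_r in Hhi; lra. }
  assert (HdK1 : d * (K + 1) < 1) by nra.
  destruct (Int_part_perturb s t) as [HI Hft]; [fold d; nra | fold d; nra |].
  assert (Hd' : frac_part s - d <= frac_part t).
  { rewrite Hft. pose proof (Rle_abs (- (t - s))) as Ha. rewrite Rabs_Ropp in Ha. fold d in Ha. lra. }
  assert (HtK : 1 <= (K + 1) * frac_part t) by nra.
  assert (Hfs : 0 < frac_part s) by nra.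
  assert (Hft0 : 0 < frac_part t) by nra.
  split; [exact HI|]. split; [lra|].
  assert (E : / frac_part t - / frac_part s = - (t - s) * / (frac_part s * frac_part t)).
  { replace (t - s) with (frac_part t - frac_part s) by lra. field. split; lra. }
  rewrite E, Rabs_mult, Rabs_Ropp.
  rewrite (Rabs_right (/ _)) by (apply Rle_ge, Rlt_le, Rinv_0_lt_compat; nra).
  fold d. apply Rmult_le_compat_l; [exact Hd0|].
  apply Rmult_le_reg_l with (frac_part s * frac_part t); [nra|].
  rewrite Rinv_r by nra. nra.
Qed.

Definition bounded_upto (x K : R) (N : nat) : Prop :=
  forall k, (1 <= k <= N)%nat -> exists s, cf_rem x k = Some s /\ s <= K.

Lemma bounded_upto_margins x K N k s : bounded_upto x K N -> (k + 2 <= N)%nat ->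
  cf_rem x k = Some s -> / K <= frac_part s /\ / (K + 1) <= 1 - frac_part s.
Proof.
  intros HB Hk Hs.
  destruct (HB (S k)) as [s1 [H1 Hs1]]; [lia|].
  destruct (HB (S (S k))) as [s2 [H2 Hs2]]; [lia|].
  pose proof (cf_rem_succ_gt1 _ _ _ H1) as G1.
  pose proof (cf_rem_succ_gt1 _ _ _ H2) as G2.
  destruct (cf_rem_succ_inv _ _ _ H1) as [s' [Hs' [_ Es1]]].
  rewrite Hs in Hs'. injection Hs' as <-.
  assert (Efs : frac_part s = / s1) by (rewrite Es1, Rinv_inv; reflexivity).
  assert (Hb : 1 <= IZR (Int_part s1)) by (apply IZR_le, Int_part_ge1; lra).
  pose proof (cf_rem_succ_decomp _ _ _ _ H1 H2) as Ds1.
  assert (Hs1K : 1 <= (s1 - 1) * K).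
  { assert (1 <= s2 * (s1 - 1)).
    { rewrite Ds1. replace (s2 * (IZR (Int_part s1) + / s2 - 1))
        with (s2 * (IZR (Int_part s1) - 1) + 1) by (field; lra). nra. }
    nra. }
  rewrite Efs. split.
  - apply Rinv_le_contravar; lra.
  - apply Rmult_le_reg_l with ((K + 1) * s1); [nra|].
    field_simplify; [nra | lra | lra].
Qed.

Section Perturbation.

Variables (x y K : R) (n : nat).
Hypothesis HK : 1 <= K.
Hypothesis Hbounded : bounded_upto x K (n + 2).
Hypothesis Hclose : Rabs (y - x) * (K + 1) ^ (2 * n + 2) < 1.

Lemma cf_rem_perturb_step k s t : (k <= n)%nat -> cf_rem x k = Some s -> cf_rem y k = Some t ->
  Rabs (t - s) <= Rabs (y - x) * (K + 1) ^ (2 * k) ->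
  Int_part t = Int_part s /\ frac_part t <> 0 /\
  Rabs (/ frac_part t - / frac_part s) <= Rabs (y - x) * (K + 1) ^ (2 * (S k)).
Proof.
  intros Hk Hs Ht Hd.
  destruct (bounded_upto_margins x K (n + 2) k s Hbounded ltac:(lia) Hs) as [M1 M2].
  assert (Hd2 : Rabs (t - s) * (K + 1) ^ 2 <= Rabs (y - x) * (K + 1) ^ (2 * k + 2)).
  { rewrite pow_add, <- Rmult_assoc. apply Rmult_le_compat_r; [apply pow_le; lra | exact Hd]. }
  assert (Hsmall : Rabs (t - s) * (K + 1) ^ 2 < 1).
  { apply Rle_lt_trans with (1 := Hd2). apply Rle_lt_trans with (2 := Hclose).
    apply Rmult_le_compat_l; [apply Rabs_pos|]. apply Rle_pow; lia || lra. }
  destruct (gauss_step_stable K s t HK M1 M2 Hsmall) as [HI [Hf Hinv]].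
  repeat split; auto. replace (2 * S k)%nat with (2 * k + 2)%nat by lia. lra.
Qed.

Lemma cf_rem_perturb k : (k <= n)%nat -> exists s t, cf_rem x k = Some s /\ cf_rem y k = Some t /\
  Rabs (t - s) <= Rabs (y - x) * (K + 1) ^ (2 * k).
Proof.
  induction k as [|k IH]; intros Hk.
  - exists x, y. simpl. repeat split; lra.
  - destruct IH as [s [t [Hs [Ht Hd]]]]; [lia|].
    destruct (cf_rem_perturb_step k s t ltac:(lia) Hs Ht Hd) as [_ [Hft Hinv]].
    assert (Hfs : frac_part s <> 0).
    { destruct (Hbounded (S k)) as [s1 [H1 _]]; [lia|].
      destruct (cf_rem_succ_inv _ _ _ H1) as [s' [Hs' [Hf _]]]. congruence. }
    exists (/ frac_part s), (/ frac_part t).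
    split; [now apply cf_rem_next|]. split; [now apply cf_rem_next|]. exact Hinv.
Qed.

Lemma cf_prefix_perturb :
  cf_len_ge y n /\ forall j, (j <= n)%nat -> cf_digit y j = cf_digit x j.
Proof.
  split.
  - destruct (cf_rem_perturb n (le_n n)) as [s [t [_ [Ht _]]]]. unfold cf_len_ge. congruence.
  - intros j Hj. destruct (cf_rem_perturb j Hj) as [s [t [Hs [Ht Hd]]]].
    destruct (cf_rem_perturb_step j s t Hj Hs Ht Hd) as [HI _].
    unfold cf_digit. now rewrite Hs, Ht, HI.
Qed.

End Perturbation.

Lemma growth_le_cube (j : nat) : (1 <= j)%nat -> INR j * ln (INR j) ^ 2 <= INR j ^ 3.
Proof.
  intros Hj. assert (1 <= INR j) by (apply (le_INR 1); exact Hj).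
  pose proof (ln_nonneg _ H). pose proof (ln_lt_id (INR j) ltac:(lra)).
  simpl. assert (ln (INR j) * ln (INR j) <= INR j * INR j) by nra. nra.
Qed.

Lemma inT_mono B B' x : B <= B' -> inT B x -> inT B' x.
Proof.
  intros HB H j k Hj Hd. apply Rle_trans with (1 := H j k Hj Hd). now apply Rle_max_compat_r.
Qed.

Definition digit_cap (B : R) (N : nat) : R := B + INR N ^ 3 + 1.

Lemma digit_cap_ge1 B N : 0 <= B -> 1 <= digit_cap B N.
Proof. intros HB. unfold digit_cap. pose proof (pow_le (INR N) 3 (pos_INR N)). lra. Qed.

Lemma cf_rem_le_digit_cap B x N k s : 0 <= B -> inT B x -> (1 <= k <= N)%nat ->
  cf_rem x k = Some s -> s <= digit_cap B N.
Proof.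
  intros HB HT Hk Hs.
  assert (Hd : cf_digit x k = Some (Int_part s)) by (unfold cf_digit; now rewrite Hs).
  pose proof (HT k _ ltac:(lia) Hd) as Hb.
  pose proof (growth_le_cube k ltac:(lia)).
  assert (INR k ^ 3 <= INR N ^ 3) by (apply pow_incr; split; [apply pos_INR | apply le_INR; lia]).
  assert (0 <= INR k * ln (INR k) ^ 2) by (apply Rmult_le_pos; [apply pos_INR | apply pow2_ge_0]).
  pose proof (Rmax_le_Rplus B (INR k * ln (INR k) ^ 2) HB ltac:(lra)).
  pose proof (frac_part_bounds s). unfold frac_part, digit_cap in *. lra.
Qed.

Lemma bounded_upto_of_inT B x N : 0 <= B -> inT B x -> cf_len_ge x N ->
  bounded_upto x (digit_cap B N) N.
Proof.
  intros HB HT Hlen k Hk. destruct (cf_rem_of_len_ge x N k Hlen ltac:(lia)) as [s Hs].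
  exists s. split; [exact Hs|]. now apply (cf_rem_le_digit_cap B x N k).
Qed.

Lemma two_le_growth (j : nat) : (3 <= j)%nat -> 2 <= INR j * ln (INR j) ^ 2.
Proof.
  intros Hj. assert (H3 : 3 <= INR j) by (apply (le_INR 3) in Hj; simpl in Hj; lra).
  assert (1 <= ln (INR j)).
  { rewrite <- (ln_exp 1). apply ln_le; [apply exp_pos|]. pose proof exp_le_3. lra. }
  simpl. nra.
Qed.

Lemma inV_of_close B B' m x (y : Qc) : 0 <= B -> B <= B' -> inT B x -> cf_len_ge x (m + 2) ->
  inT B (qc2R y) -> Rabs (qc2R y - x) * (digit_cap B (m + 2) + 1) ^ (2 * m + 2) < 1 ->
  inV B' m x y.
Proof.
  intros HB HBB' HTx Hlen HTy Hclose.
  destruct (cf_prefix_perturb x (qc2R y) (digit_cap B (m + 2)) m (digit_cap_ge1 B _ HB)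
    (bounded_upto_of_inT B x _ HB HTx Hlen) Hclose) as [Hleny Hdig].
  split; [now apply inT_mono with B|]. split; assumption.
Qed.

(** * Rational numbers and Euclid's algorithm *)

Lemma is_rat_Q x : is_rat x <-> exists r : Q, x = Q2R r.
Proof.
  split.
  - intros [y ->]. now exists (this y).
  - intros [r ->]. exists (Q2Qc r). unfold qc2R. simpl. apply Qeq_eqR.
    symmetry. apply Qred_correct.
Qed.

Lemma is_rat_IZR z : is_rat (IZR z).
Proof. apply is_rat_Q. exists (inject_Z z). unfold Q2R. simpl. field. Qed.

Lemma is_rat_plus a b : is_rat a -> is_rat b -> is_rat (a + b).
Proof. rewrite !is_rat_Q. intros [r ->] [s ->]. exists (r + s)%Q. now rewrite Q2R_plus. Qed.

Lemma is_rat_inv a : is_rat a -> is_rat (/ a).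
Proof.
  rewrite !is_rat_Q. intros [r ->]. destruct (Qeq_dec r 0) as [E|E].
  - exists 0%Q. apply Qeq_eqR in E. rewrite E. unfold Q2R. simpl. rewrite Rmult_0_l, Rinv_0. ring.
  - exists (/ r)%Q. now rewrite Q2R_inv.
Qed.

Lemma is_rat_mult a b : is_rat a -> is_rat b -> is_rat (a * b).
Proof. rewrite !is_rat_Q. intros [r ->] [s ->]. exists (r * s)%Q. now rewrite Q2R_mult. Qed.

Lemma is_rat_ratio (a q : nat) : is_rat (INR a / INR q).
Proof.
  rewrite !INR_IZR_INZ. apply is_rat_mult; [|apply is_rat_inv]; apply is_rat_IZR.
Qed.

Lemma qc2R_inj y y' : qc2R y = qc2R y' -> y = y'.
Proof. intros H. apply Qc_is_canon. now apply eqR_Qeq. Qed.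

Lemma is_rat_of_cf_rem x n s : cf_rem x n = Some s -> is_rat s -> is_rat x.
Proof.
  revert s. induction n as [|n IH]; intros s Hs Hr.
  - now injection Hs as ->.
  - destruct (cf_rem_succ_inv _ _ _ Hs) as [t [Ht [_ ->]]].
    apply (IH t Ht). rewrite (Rplus_Int_part_frac_part t), <- (Rinv_inv (frac_part t)).
    apply is_rat_plus; [apply is_rat_IZR | now apply is_rat_inv].
Qed.

Lemma cf_len_ge_irrational x n : ~ is_rat x -> cf_len_ge x n.
Proof.
  intros Hx. induction n as [|n IH]; [discriminate|].
  destruct (cf_rem x n) as [s|] eqn:Hs; [|contradiction].
  destruct (Req_dec (frac_part s) 0) as [Hf|Hf].
  - exfalso. apply Hx, (is_rat_of_cf_rem x n s Hs).
    rewrite (Rplus_Int_part_frac_part s), Hf, Rplus_0_r. apply is_rat_IZR.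
  - unfold cf_len_ge. now rewrite (cf_rem_next x n s Hs Hf).
Qed.

Lemma frac_part_ratio (U V : nat) : (0 < V)%nat ->
  frac_part (INR U / INR V) = INR (U mod V) / INR V.
Proof.
  intros HV. assert (HV' : 0 < INR V) by (apply lt_0_INR; exact HV).
  pose proof (Nat.mod_upper_bound U V ltac:(lia)) as Hm. apply lt_INR in Hm.
  assert (E : INR U / INR V = IZR (Z.of_nat (U / V)) + INR (U mod V) / INR V).
  { rewrite <- INR_IZR_INZ. rewrite (Nat.div_mod_eq U V) at 1.
    rewrite plus_INR, mult_INR. field. lra. }
  rewrite E. apply frac_part_IZR_plus. split.
  - apply Rdiv_le_0_compat; [apply pos_INR | exact HV'].
  - apply Rmult_lt_reg_r with (INR V); [exact HV'|]. field_simplify; lra.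
Qed.

Lemma coprime_ratio_integer (U V : nat) : (0 < V)%nat -> Nat.gcd U V = 1%nat ->
  frac_part (INR U / INR V) = 0 -> V = 1%nat.
Proof.
  intros HV Hg Hf. rewrite frac_part_ratio in Hf by exact HV.
  assert (Hm : U mod V = 0%nat).
  { apply INR_eq. simpl. apply Rmult_eq_reg_r with (/ INR V); [lra|].
    apply Rinv_neq_0_compat, not_0_INR. lia. }
  apply Nat.Lcm0.mod_divide in Hm.
  apply Nat.divide_1_r. rewrite <- Hg. apply Nat.gcd_greatest; [exact Hm | apply Nat.divide_refl].
Qed.

Section EuclidLength.

Variables (a q : nat) (K : R).
Hypothesis Hq : (0 < q)%nat.
Hypothesis Hcop : Nat.gcd a q = 1%nat.
Hypothesis HK : 1 <= K.

Let X := INR a / INR q.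

Lemma cf_rem_ratio_denominator k :
  (forall j s, (1 <= j <= k)%nat -> cf_rem X j = Some s -> s <= K) ->
  (exists U V, (0 < V)%nat /\ Nat.gcd U V = 1%nat /\ cf_rem X k = Some (INR U / INR V) /\
     INR q <= INR V * K ^ k) \/ INR q <= K ^ k.
Proof.
  induction k as [|k IH]; intros Hbound.
  - left. exists a, q. simpl. repeat split; auto. lra.
  - assert (HKk : K ^ k <= K ^ S k) by (simpl; pose proof (pow_R1_Rle K k HK); nra).
    destruct IH as [[U [V [HV [Hg [Hs Hqb]]]]] | Hqb].
    { intros j s Hj. apply Hbound. lia. }
    2: right; lra.
    destruct (Req_dec (frac_part (INR U / INR V)) 0) as [Hf|Hf].
    + right. rewrite (coprime_ratio_integer U V HV Hg Hf) in Hqb. simpl in Hqb. lra.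
    + left. set (W := (U mod V)%nat).
      assert (HW : (0 < W)%nat).
      { destruct W eqn:E; [|lia]. exfalso. apply Hf. rewrite frac_part_ratio by exact HV.
        fold W. rewrite E. simpl. unfold Rdiv. ring. }
      assert (HV' : 0 < INR V) by (apply lt_0_INR; lia).
      assert (HW' : 0 < INR W) by (apply lt_0_INR; lia).
      assert (Hnext : cf_rem X (S k) = Some (INR V / INR W)).
      { rewrite (cf_rem_next X k _ Hs Hf), frac_part_ratio by exact HV. fold W.
        f_equal. field. lra. }
      exists V, W. repeat split; auto.
      * unfold W. rewrite Nat.gcd_comm, Nat.Lcm0.gcd_mod. now rewrite Nat.gcd_comm.
      * assert (Hr : INR V / INR W <= K) by (apply (Hbound (S k)); [lia | exact Hnext]).
        assert (INR V <= INR W * K).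
        { apply Rmult_le_reg_r with (/ INR W); [now apply Rinv_0_lt_compat|].
          field_simplify; lra. }
        simpl. pose proof (pow_R1_Rle K k HK). nra.
Qed.

Lemma cf_len_ge_ratio N :
  (forall k s, (1 <= k <= N)%nat -> cf_rem X k = Some s -> s <= K) ->
  K ^ N < INR q -> cf_len_ge X N.
Proof.
  intros Hbound HN.
  destruct (cf_rem_ratio_denominator N Hbound) as [[U [V [_ [_ [Hs _]]]]] | Hqb].
  - unfold cf_len_ge. congruence.
  - lra.
Qed.

End EuclidLength.

(** * Truncated expansions *)

Lemma cf_rem_diff_succ x y k s s1 t t1 :
  cf_rem x k = Some s -> cf_rem x (S k) = Some s1 ->
  cf_rem y k = Some t -> cf_rem y (S k) = Some t1 -> Int_part s = Int_part t ->
  Rabs (s - t) * (s1 * t1) = Rabs (s1 - t1).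
Proof.
  intros Hs Hs1 Ht Ht1 HI.
  pose proof (cf_rem_succ_gt1 _ _ _ Hs1). pose proof (cf_rem_succ_gt1 _ _ _ Ht1).
  rewrite (cf_rem_succ_decomp _ _ _ _ Hs Hs1), (cf_rem_succ_decomp _ _ _ _ Ht Ht1), HI.
  rewrite <- (Rabs_right (s1 * t1)) by nra. rewrite <- Rabs_mult, Rabs_minus_sym.
  f_equal. field. lra.
Qed.

Lemma cf_rem_diff_two_steps x y k s s1 s2 t t1 t2 :
  cf_rem x k = Some s -> cf_rem x (S k) = Some s1 -> cf_rem x (S (S k)) = Some s2 ->
  cf_rem y k = Some t -> cf_rem y (S k) = Some t1 -> cf_rem y (S (S k)) = Some t2 ->
  Int_part s = Int_part t -> Int_part s1 = Int_part t1 ->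
  4 * Rabs (s - t) <= Rabs (s2 - t2).
Proof.
  intros Hs Hs1 Hs2 Ht Ht1 Ht2 HI HI1.
  assert (Hprod : forall z z1 z2, cf_rem z (S k) = Some z1 -> cf_rem z (S (S k)) = Some z2 ->
            2 <= z1 * z2).
  { intros z z1 z2 Hz1 Hz2.
    pose proof (cf_rem_succ_gt1 _ _ _ Hz1). pose proof (cf_rem_succ_gt1 _ _ _ Hz2).
    assert (Hb : 1 <= IZR (Int_part z1)) by (apply IZR_le, Int_part_ge1; lra).
    rewrite (cf_rem_succ_decomp _ _ _ _ Hz1 Hz2).
    replace ((IZR (Int_part z1) + / z2) * z2) with (IZR (Int_part z1) * z2 + 1) by (field; lra).
    nra. }
  pose proof (Hprod x s1 s2 Hs1 Hs2). pose proof (Hprod y t1 t2 Ht1 Ht2).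
  rewrite <- (cf_rem_diff_succ x y (S k) s1 s2 t1 t2), <- (cf_rem_diff_succ x y k s s1 t t1) by assumption.
  assert (H4 : 4 <= s1 * t1 * (s2 * t2)).
  { replace (s1 * t1 * (s2 * t2)) with ((s1 * s2) * (t1 * t2)) by ring. nra. }
  pose proof (Rabs_pos (s - t)). nra.
Qed.

Section CommonPrefix.

Variables (x y : R) (i0 : nat).
Hypothesis Hx : cf_len_ge x (2 * i0).
Hypothesis Hy : cf_len_ge y (2 * i0).
Hypothesis Hdigits : forall k, (k < 2 * i0)%nat -> cf_digit x k = cf_digit y k.

Lemma cf_common_prefix_close i : (i <= i0)%nat -> exists s t,
  cf_rem x (2 * i) = Some s /\ cf_rem y (2 * i) = Some t /\ Rabs (x - y) * 4 ^ i <= Rabs (s - t).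
Proof.
  assert (Hdig : forall k s t, (k < 2 * i0)%nat -> cf_rem x k = Some s -> cf_rem y k = Some t ->
            Int_part s = Int_part t).
  { intros k s t Hk Hs Ht. specialize (Hdigits k Hk). unfold cf_digit in Hdigits.
    rewrite Hs, Ht in Hdigits. congruence. }
  induction i as [|i IH]; intros Hi.
  - exists x, y. simpl. repeat split. lra.
  - destruct IH as [s [t [Hs [Ht Hst]]]]; [lia|].
    destruct (cf_rem_of_len_ge x _ (S (2 * i)) Hx ltac:(lia)) as [s1 Hs1].
    destruct (cf_rem_of_len_ge x _ (S (S (2 * i))) Hx ltac:(lia)) as [s2 Hs2].
    destruct (cf_rem_of_len_ge y _ (S (2 * i)) Hy ltac:(lia)) as [t1 Ht1].
    destruct (cf_rem_of_len_ge y _ (S (S (2 * i))) Hy ltac:(lia)) as [t2 Ht2].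
    replace (2 * S i)%nat with (S (S (2 * i))) by lia.
    exists s2, t2. split; [exact Hs2|]. split; [exact Ht2|].
    pose proof (cf_rem_diff_two_steps x y (2 * i) s s1 s2 t t1 t2 Hs Hs1 Hs2 Ht Ht1 Ht2
      ltac:(apply (Hdig (2 * i)%nat); auto; lia) ltac:(apply (Hdig (S (2 * i))); auto; lia)).
    simpl pow. lra.
Qed.

End CommonPrefix.

Fixpoint cf_finite (b : nat -> Z) (k len : nat) (c : Z) : R :=
  match len with
  | O => IZR c
  | S len' => IZR (b k) + / cf_finite b (S k) len' c
  end.

Lemma is_rat_cf_finite b k len c : is_rat (cf_finite b k len c).
Proof.
  revert k. induction len as [|len IH]; intros k; simpl.
  - apply is_rat_IZR.
  - apply is_rat_plus; [apply is_rat_IZR | apply is_rat_inv, IH].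
Qed.

Section FiniteExpansion.

Variables (b : nat -> Z) (c : Z) (len : nat).
Hypothesis Hb : forall j, (1 <= j)%nat -> (1 <= b j)%Z.
Hypothesis Hc : (2 <= c)%Z.

Lemma cf_finite_gt1 k n : (1 <= k)%nat -> 1 < cf_finite b k n c.
Proof.
  revert k. induction n as [|n IH]; intros k Hk; simpl.
  - apply IZR_le in Hc. lra.
  - pose proof (IZR_le _ _ (Hb k Hk)). pose proof (IH (S k) ltac:(lia)).
    assert (0 < / cf_finite b (S k) n c) by (apply Rinv_0_lt_compat; lra). lra.
Qed.

Lemma cf_rem_cf_finite j : (j <= len)%nat ->
  cf_rem (cf_finite b 0 len c) j = Some (cf_finite b j (len - j) c).
Proof.
  induction j as [|j IH]; intros Hj.
  - now rewrite Nat.sub_0_r.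
  - replace (len - j)%nat with (S (len - S j)) in IH by lia.
    pose proof (cf_finite_gt1 (S j) (len - S j) ltac:(lia)) as Hgt.
    assert (Hf : frac_part (cf_finite b j (S (len - S j)) c) = / cf_finite b (S j) (len - S j) c).
    { apply frac_part_IZR_plus, Rinv_gt1_bounds, Hgt. }
    rewrite (cf_rem_next _ _ _ (IH ltac:(lia))), Hf, Rinv_inv; [reflexivity|].
    rewrite Hf. apply Rinv_neq_0_compat. lra.
Qed.

Lemma cf_digit_cf_finite j :
  cf_digit (cf_finite b 0 len c) j =
  if (j <? len)%nat then Some (b j) else if (j =? len)%nat then Some c else None.
Proof.
  unfold cf_digit. destruct (Nat.ltb_spec j len) as [Hj|Hj].
  - rewrite cf_rem_cf_finite by lia. replace (len - j)%nat with (S (len - S j)) by lia.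
    f_equal. apply Int_part_IZR_plus, Rinv_gt1_bounds, cf_finite_gt1. lia.
  - destruct (Nat.eqb_spec j len) as [->|Hne].
    + rewrite cf_rem_cf_finite, Nat.sub_diag by lia. simpl. f_equal.
      rewrite <- (Rplus_0_r (IZR c)). apply Int_part_IZR_plus. lra.
    + replace (cf_rem _ j) with (@None R); [reflexivity|]. symmetry.
      apply (cf_rem_None_le _ (S len)); [lia|]. cbn [cf_rem].
      rewrite cf_rem_cf_finite, Nat.sub_diag by lia. simpl.
      destruct (Req_EM_T _ 0) as [|Hf]; [reflexivity|].
      exfalso. apply Hf. rewrite <- (Rplus_0_r (IZR c)). apply frac_part_IZR_plus. lra.
Qed.

End FiniteExpansion.

Lemma Rabs_sub_last_quotient s : 1 <= s -> Rabs (s - IZR (Z.max (Int_part s) 2)) <= 1.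
Proof.
  intros Hs. pose proof (frac_part_bounds s) as Hf. unfold frac_part in Hf.
  pose proof (Int_part_ge1 s Hs) as Hb.
  destruct (Z.max_spec (Int_part s) 2) as [[Hlt ->]|[_ ->]]; apply Rabs_le.
  - replace (Int_part s) with 1%Z in Hf by lia. lra.
  - split; lra.
Qed.

Definition partial_quotient (x : R) (k : nat) : Z :=
  match cf_digit x k with Some d => d | None => 0%Z end.

(** The last partial quotient is raised to 2 if necessary, so that the Gauss map stops exactly
    there; [two_le_growth] keeps it admissible in T(B). *)
Definition cf_truncate (x : R) (n : nat) : R :=
  cf_finite (partial_quotient x) 0 n (Z.max (partial_quotient x n) 2).

Section Truncation.

Variable x : R.
Hypothesis Hx : ~ is_rat x.

Lemma cf_rem_partial_quotient k : exists s, cf_rem x k = Some s /\ partial_quotient x k = Int_part s.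
Proof.
  pose proof (cf_len_ge_irrational x k Hx) as Hk. unfold cf_len_ge in Hk.
  unfold partial_quotient, cf_digit.
  destruct (cf_rem x k) as [s|] eqn:E; [now exists s | now contradiction Hk].
Qed.

Lemma cf_digit_partial_quotient k : cf_digit x k = Some (partial_quotient x k).
Proof. destruct (cf_rem_partial_quotient k) as [s [Hs ->]]. unfold cf_digit. now rewrite Hs. Qed.

Lemma partial_quotient_ge1 j : (1 <= j)%nat -> (1 <= partial_quotient x j)%Z.
Proof.
  intros Hj. destruct (cf_rem_partial_quotient j) as [s [Hs ->]].
  apply Int_part_ge1, Rlt_le, (cf_rem_gt1 x j s Hj Hs).
Qed.

Lemma inT_cf_truncate B n : (3 <= n)%nat -> inT B x -> inT B (cf_truncate x n).
Proof.
  intros Hn HT j k Hj Hd. unfold cf_truncate in Hd.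
  rewrite (cf_digit_cf_finite _ _ n partial_quotient_ge1 (Z.le_max_r (partial_quotient x n) 2)) in Hd.
  destruct (Nat.ltb_spec j n); [|destruct (Nat.eqb_spec j n) as [->|]]; try discriminate.
  - injection Hd as <-. apply HT; [exact Hj | apply cf_digit_partial_quotient].
  - injection Hd as <-. destruct (Z.max_spec (partial_quotient x n) 2) as [[_ ->]|[_ ->]].
    + apply Rle_trans with (2 := Rmax_r _ _), two_le_growth, Hn.
    + apply HT; [exact Hj | apply cf_digit_partial_quotient].
Qed.

Lemma cf_truncate_close i : (1 <= i)%nat -> Rabs (x - cf_truncate x (2 * i)) * 4 ^ i <= 1.
Proof.
  intros Hi. set (n := (2 * i)%nat).
  assert (Hrem := cf_rem_cf_finite _ _ n partial_quotient_ge1 (Z.le_max_r (partial_quotient x n) 2)).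
  assert (Hlen : cf_len_ge (cf_truncate x n) n).
  { unfold cf_len_ge, cf_truncate. rewrite (Hrem n (le_n n)). discriminate. }
  assert (Hdig : forall k, (k < n)%nat -> cf_digit x k = cf_digit (cf_truncate x n) k).
  { intros k Hk. unfold cf_truncate.
    rewrite cf_digit_partial_quotient, (cf_digit_cf_finite _ _ n partial_quotient_ge1 (Z.le_max_r (partial_quotient x n) 2)).
    destruct (Nat.ltb_spec k n); [reflexivity | lia]. }
  destruct (cf_common_prefix_close x _ i (cf_len_ge_irrational x n Hx) Hlen Hdig i (le_n i))
    as [s [t [Hs [Ht Hst]]]].
  fold n in Hs, Ht. unfold cf_truncate in Ht.
  rewrite (Hrem n (le_n n)), Nat.sub_diag in Ht. injection Ht as <-.
  destruct (cf_rem_partial_quotient n) as [s' [Hs' Hpq]]. rewrite Hs in Hs'. injection Hs' as <-.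
  rewrite Hpq in Hst. apply Rle_trans with (1 := Hst), Rabs_sub_last_quotient.
  apply Rlt_le, (cf_rem_gt1 x n s ltac:(unfold n; lia) Hs).
Qed.

End Truncation.

Lemma rat_inT_dense B x eps : inT B x -> ~ is_rat x -> 0 < eps ->
  exists y : Qc, inT B (qc2R y) /\ Rabs (qc2R y - x) < eps.
Proof.
  intros HT Hx He.
  destruct (Pow_x_infinity 4 ltac:(rewrite Rabs_right; lra) (/ eps + 1)) as [N HN].
  set (i := (N + 2)%nat).
  assert (Hi : / eps < 4 ^ i).
  { specialize (HN i ltac:(unfold i; lia)).
    rewrite Rabs_right in HN by (apply Rle_ge, pow_le; lra). lra. }
  destruct (is_rat_cf_finite (partial_quotient x) 0 (2 * i) (Z.max (partial_quotient x (2 * i)) 2))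
    as [y Hy].
  exists y. rewrite <- Hy. fold (cf_truncate x (2 * i)). split.
  - apply inT_cf_truncate; [exact Hx | unfold i; lia | exact HT].
  - pose proof (cf_truncate_close x Hx i ltac:(unfold i; lia)) as Hclose.
    assert (H4 : 0 < 4 ^ i) by (apply pow_lt; lra).
    rewrite Rabs_minus_sym.
    apply Rmult_lt_reg_r with (4 ^ i); [exact H4|].
    apply Rle_lt_trans with 1; [exact Hclose|].
    apply Rmult_lt_reg_l with (/ eps); [now apply Rinv_0_lt_compat|].
    rewrite <- Rmult_assoc, Rinv_l by lra. lra.
Qed.

(** * The extension f* *)

Section Extension.

Variables (f : Qc -> C) (lam : R).
Hypothesis Hlam : 1 < lam.
Hypothesis HS : propS lam f.

Lemma propS_cauchy B x eps : 0 <= B -> inT B x -> ~ is_rat x -> 0 < eps ->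
  exists delta, 0 < delta /\ forall y y' : Qc, inT B (qc2R y) -> inT B (qc2R y') ->
    Rabs (qc2R y - x) < delta -> Rabs (qc2R y' - x) < delta ->
    Cmod (Cminus (f y) (f y')) <= eps.
Proof.
  intros HB HT Hx He.
  destruct (HS eps He) as [M HM]. destruct (nat_above B) as [m0 Hm0].
  set (m := (M + m0 + 1)%nat).
  assert (HBm : B <= Rpower (INR m) lam).
  { apply Rle_trans with (INR m); [|apply Rpower_ge_base; unfold m; lia || lra].
    pose proof (le_INR m0 m ltac:(unfold m; lia)). lra. }
  set (P := (digit_cap B (m + 2) + 1) ^ (2 * m + 2)).
  assert (HP : 0 < P) by (apply pow_lt; pose proof (digit_cap_ge1 B (m + 2) HB); lra).
  exists (/ P). split; [now apply Rinv_0_lt_compat|].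
  assert (HV : forall y : Qc, inT B (qc2R y) -> Rabs (qc2R y - x) < / P ->
             inV (Rpower (INR m) lam) m x y).
  { intros y Hy Hd. apply (inV_of_close B); auto using cf_len_ge_irrational.
    fold P. apply Rmult_lt_reg_r with (/ P); [now apply Rinv_0_lt_compat|].
    rewrite Rmult_assoc, Rinv_r, Rmult_1_r, Rmult_1_l by lra. exact Hd. }
  intros y y' Hy Hy' Hd Hd'.
  apply (HM m ltac:(unfold m; lia) x (inT_mono _ _ _ HBm HT)); auto.
Qed.

Lemma propS_limit x : ~ is_rat x -> exists L, forall B, 0 < B -> inT B x ->
  forall eps, 0 < eps -> exists delta, 0 < delta /\
    forall y : Qc, inT B (qc2R y) -> Rabs (qc2R y - x) < delta -> Cmod (Cminus (f y) L) < eps.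
Proof.
  intros Hx.
  destruct (classic (exists B0, 0 < B0 /\ inT B0 x)) as [[B0 [HB0 HT0]] | Hno].
  2: { exists (0, 0). intros B HB HT. exfalso. eauto. }
  destruct (choice (fun (n : nat) (y : Qc) => inT B0 (qc2R y) /\ Rabs (qc2R y - x) < / (INR n + 1)))
    as [ys Hys].
  { intros n. apply rat_inT_dense; auto. apply Rinv_0_lt_compat. pose proof (pos_INR n). lra. }
  assert (Hnear : forall d, 0 < d -> exists N, forall n, (N <= n)%nat -> Rabs (qc2R (ys n) - x) < d).
  { intros d Hd. destruct (Rinv_INR_succ_eventually_lt d Hd) as [N HN]. exists N. intros n Hn.
    apply Rlt_trans with (2 := HN n Hn), Hys. }
  destruct (C_cauchy_cv (fun n => f (ys n))) as [L HL].
  { intros eps He. destruct (propS_cauchy B0 x (eps / 2) ltac:(lra) HT0 Hx ltac:(lra)) as [d [Hd Hc]].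
    destruct (Hnear d Hd) as [N HN]. exists N. intros n m Hn Hm.
    apply Rle_lt_trans with (eps / 2); [|lra]. apply Hc; try apply Hys; auto. }
  exists L. intros B HB HT eps He.
  set (B' := Rmax B B0).
  assert (HTB : forall z, inT B z -> inT B' z) by (intros z; apply inT_mono, Rmax_l).
  destruct (propS_cauchy B' x (eps / 2) ltac:(unfold B'; pose proof (Rmax_l B B0); lra) (HTB x HT) Hx
    ltac:(lra)) as [d [Hd Hc]].
  exists d. split; [exact Hd|]. intros y Hy Hyd.
  destruct (Hnear d Hd) as [N1 HN1]. destruct (HL (eps / 2) ltac:(lra)) as [N2 HN2].
  set (n := (N1 + N2)%nat).
  replace (Cminus (f y) L) with (Cplus (Cminus (f y) (f (ys n))) (Cminus (f (ys n)) L)) by ring.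
  apply Rle_lt_trans with (1 := Cmod_triangle _ _).
  assert (Cmod (Cminus (f y) (f (ys n))) <= eps / 2).
  { apply Hc; auto. apply inT_mono with B0; [apply Rmax_r | apply Hys]. apply HN1. unfold n. lia. }
  pose proof (HN2 n ltac:(unfold n; lia)). lra.
Qed.

Lemma fstar_exists : exists fstar, is_fstar f fstar.
Proof.
  destruct (choice (fun x L => (forall y, x = qc2R y -> L = f y) /\
    (forall B, 0 < B -> inT B x -> ~ is_rat x -> forall eps, 0 < eps -> exists delta, 0 < delta /\
       forall y : Qc, inT B (qc2R y) -> Rabs (qc2R y - x) < delta -> Cmod (Cminus (f y) L) < eps)))
    as [fstar Hfstar].
  { intros x. destruct (classic (is_rat x)) as [[y0 Hy0] | Hx].
    - exists (f y0). split.
      + intros y Hy. f_equal. apply qc2R_inj. congruence.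
      + intros B _ _ Hn. exfalso. apply Hn. now exists y0.
    - destruct (propS_limit x Hx) as [L HL]. exists L. split.
      + intros y Hy. exfalso. apply Hx. now exists y.
      + intros B HB HT _. now apply HL. }
  exists fstar. split.
  - intros y. now apply (proj1 (Hfstar (qc2R y))).
  - intros B x HB HT Hx. now apply (proj2 (Hfstar x)).
Qed.

End Extension.

(** * Choice of the depth m *)

Lemma Rpower_eventually_ge a c : 0 < a -> Rbar_locally p_infty (fun L => c <= Rpower L a).
Proof.
  intros Ha. set (c1 := Rmax c 1).
  assert (Hc1 : 1 <= c1) by apply Rmax_r.
  exists (Rpower c1 (/ a)). intros L HL.
  assert (H0 : 0 < Rpower c1 (/ a)) by apply exp_pos.
  apply Rle_trans with c1; [apply Rmax_l|].
  replace c1 with (Rpower (Rpower c1 (/ a)) a) at 1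
    by (rewrite Rpower_mult, Rinv_l, Rpower_1; lra).
  apply Rle_Rpower_l; lra.
Qed.

Lemma ln_eventually_le_Rpower a C : 0 < a -> 0 <= C ->
  Rbar_locally p_infty (fun L => C * ln L <= Rpower L a).
Proof.
  intros Ha HC.
  apply (filter_imp (fun L => 1 <= L /\ 2 * C / a <= Rpower L (a / 2))).
  - intros L [HL1 HL2].
    assert (Hln : ln L < 2 / a * Rpower L (a / 2)).
    { pose proof (ln_lt_id (Rpower L (a / 2)) (exp_pos _)) as H. rewrite ln_Rpower in H.
      apply Rmult_lt_compat_l with (r := 2 / a) in H; [|apply Rdiv_lt_0_compat; lra].
      replace (2 / a * (a / 2 * ln L)) with (ln L) in H by (field; lra). exact H. }
    replace (Rpower L a) with (Rpower L (a / 2) * Rpower L (a / 2))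
      by (rewrite <- Rpower_plus; f_equal; field).
    pose proof (exp_pos (a / 2 * ln L)). pose proof (ln_nonneg L HL1).
    apply Rle_trans with (C * (2 / a * Rpower L (a / 2))); [apply Rmult_le_compat_l; lra|].
    replace (C * (2 / a * Rpower L (a / 2))) with (2 * C / a * Rpower L (a / 2)) by (field; lra).
    apply Rmult_le_compat_r; [unfold Rpower; lra | exact HL2].
  - apply filter_and; [now exists 1; intros; lra | now apply Rpower_eventually_ge; lra].
Qed.

Lemma ln_cap_bound L P (m : nat) : 1 <= L -> 1 <= P <= L -> INR m <= P + 1 ->
  ln (L * ln L ^ 2 + INR (m + 2) ^ 3 + 2) <= 67 + 3 * ln L.
Proof.
  intros HL HP Hm.
  pose proof (ln_nonneg L HL). pose proof (ln_lt_id L ltac:(lra)).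
  assert (Hm2 : INR (m + 2) <= 4 * L) by (rewrite plus_INR; simpl; lra).
  assert (H1 : L * ln L ^ 2 <= L ^ 3) by (simpl; apply Rmult_le_compat_l; nra).
  assert (H2 : INR (m + 2) ^ 3 <= 64 * L ^ 3).
  { replace (64 * L ^ 3) with ((4 * L) ^ 3) by ring. apply pow_incr. split; [apply pos_INR | lra]. }
  assert (H3 : 1 <= L ^ 3) by (apply pow_R1_Rle; lra).
  assert (H4 : 0 <= L * ln L ^ 2) by (apply Rmult_le_pos; [lra | apply pow2_ge_0]).
  assert (H5 : 0 <= INR (m + 2) ^ 3) by (apply pow_le, pos_INR).
  apply Rle_trans with (ln (67 * L ^ 3)); [apply ln_le; lra|].
  rewrite ln_mult, <- Rpower_pow, ln_Rpower by (try apply pow_lt; lra).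
  pose proof (ln_lt_id 67 ltac:(lra)). simpl. lra.
Qed.

Lemma scale_in_log lam (M : nat) : 1 < lam -> Rbar_locally p_infty (fun L =>
  exists m : nat, (M <= m)%nat /\ L * ln L ^ 2 <= Rpower (INR m) lam /\
    INR (2 * m + 2) * ln (L * ln L ^ 2 + INR (m + 2) ^ 3 + 2) <= 3 / 4 * L).
Proof.
  intros Hlam.
  (* m is taken near L^th: then m^lam >= L^(1 + 2 dl) beats L (ln L)^2, while m ln L = o(L).
     The constants 1072 and 48 come from splitting 6 P (67 + 3 ln L) <= 3/4 L into
     402 P <= 3/8 L and 18 P ln L <= 3/8 L. *)
  set (th := (1 + / lam) / 2). set (dl := (lam - 1) / 4).
  assert (Hinv : 0 < / lam < 1) by (split; [apply Rinv_0_lt_compat | rewrite <- Rinv_1; apply Rinv_lt_contravar]; lra).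
  assert (Hth : 0 < th < 1) by (unfold th; lra).
  assert (Hdl : 0 < dl) by (unfold dl; lra).
  assert (Hthl : th * lam = 1 + dl + dl) by (unfold th, dl; field; lra).
  apply (filter_imp (fun L => ((1 <= L /\ INR M <= Rpower L th) /\ 1 * ln L <= Rpower L dl) /\
    (1072 <= Rpower L (1 - th) /\ 48 * ln L <= Rpower L (1 - th)))).
  2: { repeat apply filter_and; try (apply Rpower_eventually_ge || apply ln_eventually_le_Rpower); try lra.
       now exists 1; intros; lra. }
  intros L [[[HL1 HM] Hln] [H1072 H48]].
  set (P := Rpower L th) in *.
  assert (HP : 1 <= P <= L).
  { unfold P. split; [rewrite <- (Rpower_O L) by lra | rewrite <- (Rpower_1 L) at 2 by lra];
    apply Rle_Rpower; lra. }
  assert (HPL : P * Rpower L (1 - th) = L).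
  { unfold P. rewrite <- Rpower_plus. replace (th + (1 - th)) with 1 by ring. apply Rpower_1; lra. }
  pose proof (ln_nonneg L HL1).
  destruct (nat_ceil P ltac:(lra)) as [m Hm].
  exists m. split; [|split].
  - apply INR_le. lra.
  - apply Rle_trans with (Rpower P lam); [|apply Rle_Rpower_l; lra].
    unfold P. rewrite Rpower_mult, Hthl, !Rpower_plus, Rpower_1 by lra.
    simpl. rewrite Rmult_1_r, Rmult_assoc. apply Rmult_le_compat_l; [lra|].
    apply Rmult_le_compat; lra.
  - pose proof (ln_cap_bound L P m HL1 HP ltac:(lra)) as Hcap.
    assert (H2m : INR (2 * m + 2) <= 6 * P) by (rewrite plus_INR, mult_INR; simpl; lra).
    apply Rle_trans with (6 * P * (67 + 3 * ln L)).
    + apply Rmult_le_compat; [apply pos_INR | | exact H2m | exact Hcap].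
      apply ln_nonneg. pose proof (Rmult_le_pos L (ln L ^ 2) ltac:(lra) (pow2_ge_0 _)).
      pose proof (pow_le (INR (m + 2)) 3 (pos_INR _)). lra.
    + set (R1 := Rpower L (1 - th)) in *.
      assert (1072 * P <= P * R1) by nra.
      assert (48 * P * ln L <= P * R1) by nra.
      rewrite <- HPL at 2. lra.
Qed.

Lemma scale_exists lam (M : nat) : 1 < lam -> exists q0 : nat, forall q : nat, (q0 <= q)%nat ->
  0 < Bq q /\ exists m : nat, (M <= m)%nat /\ Bq q <= Rpower (INR m) lam /\
    (digit_cap (Bq q) (m + 2) + 1) ^ (2 * m + 2) <= Rpower (INR q) (3 / 4).
Proof.
  intros Hlam.
  assert (Hgt1 : Rbar_locally p_infty (fun L => 1 < L)) by (now exists 1).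
  destruct (filter_and _ _ (scale_in_log lam M Hlam) Hgt1) as [L0 HL0].
  destruct (nat_above (exp L0)) as [q0 Hq0].
  exists q0. intros q Hq.
  assert (Hqpos : exp L0 < INR q) by (pose proof (le_INR q0 q Hq); lra).
  destruct (HL0 (ln (INR q))) as [[m [HMm [HB Hcap]]] HL1].
  { rewrite <- (ln_exp L0). apply ln_increasing; [apply exp_pos | exact Hqpos]. }
  assert (Hlnln : 0 < ln (ln (INR q))) by (rewrite <- ln_1; apply ln_increasing; lra).
  split; [unfold Bq; apply Rmult_lt_0_compat; [lra | apply pow_lt; lra]|].
  exists m. split; [exact HMm|]. split; [exact HB|].
  replace (digit_cap (Bq q) (m + 2) + 1) with
    (ln (INR q) * ln (ln (INR q)) ^ 2 + INR (m + 2) ^ 3 + 2) by (unfold digit_cap, Bq; ring).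
  rewrite <- Rpower_pow by (pose proof (pow_le (INR (m + 2)) 3 (pos_INR _));
    pose proof (Rmult_le_pos (ln (INR q)) _ ltac:(lra) (pow2_ge_0 (ln (ln (INR q))))); lra).
  unfold Rpower.
  destruct (Rle_lt_or_eq_dec _ _ Hcap) as [Hlt | Heq]; [left; now apply exp_increasing | right; now rewrite Heq].
Qed.

(** * The window around a/q *)

Lemma window_inV (q a m : nat) B' : (2 <= q)%nat -> inA q a -> 0 <= Bq q -> Bq q <= B' ->
  (digit_cap (Bq q) (m + 2) + 1) ^ (2 * m + 2) <= Rpower (INR q) (3 / 4) ->
  forall y : Qc, inT (Bq q) (qc2R y) ->
    Rabs (qc2R y - INR a / INR q) < Rpower (INR q) (1 / 4) / INR q ->
    inV B' m (INR a / INR q) y.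
Proof.
  intros Hq [_ [Hcop HT]] HB HBB' Hcap y Hy Hd.
  set (K := digit_cap (Bq q) (m + 2)) in *.
  assert (HK : 1 <= K) by now apply digit_cap_ge1.
  assert (Hq1 : 1 < INR q) by (apply (lt_INR 1); lia).
  assert (H34 : Rpower (INR q) (3 / 4) < INR q).
  { rewrite <- (Rpower_1 (INR q)) at 2 by lra. apply Rpower_lt; lra. }
  assert (H14 : Rpower (INR q) (1 / 4) * Rpower (INR q) (3 / 4) = INR q).
  { rewrite <- Rpower_plus. replace (1 / 4 + 3 / 4) with 1 by field. apply Rpower_1; lra. }
  assert (Hlen : cf_len_ge (INR a / INR q) (m + 2)).
  { apply cf_len_ge_ratio with K; [lia | exact Hcop | exact HK | |].
    - intros k s Hk Hs. exact (cf_rem_le_digit_cap _ _ _ k s HB HT Hk Hs).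
    - apply Rle_lt_trans with ((K + 1) ^ (2 * m + 2)); [|lra].
      apply Rle_trans with ((K + 1) ^ (m + 2)); [apply pow_incr; lra | apply Rle_pow; lia || lra]. }
  apply (inV_of_close (Bq q)); auto. fold K.
  apply Rle_lt_trans with (Rabs (qc2R y - INR a / INR q) * Rpower (INR q) (3 / 4)).
  { apply Rmult_le_compat_l; [apply Rabs_pos | exact Hcap]. }
  assert (E : Rpower (INR q) (1 / 4) / INR q * Rpower (INR q) (3 / 4) = 1).
  { replace (Rpower (INR q) (1 / 4) / INR q * Rpower (INR q) (3 / 4))
      with (Rpower (INR q) (1 / 4) * Rpower (INR q) (3 / 4) / INR q) by (field; lra).
    rewrite H14. field. lra. }
  rewrite <- E. apply Rmult_lt_compat_r; [apply exp_pos | exact Hd].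
Qed.

Lemma is_fstar_approx f fstar B X r x (P : Qc -> Prop) : is_fstar f fstar -> 0 < B ->
  inT B x -> Rabs (x - X) < r ->
  (forall y : Qc, inT B (qc2R y) -> Rabs (qc2R y - X) < r -> P y) ->
  forall d, 0 < d -> exists y, P y /\ Cmod (Cminus (f y) (fstar x)) < d.
Proof.
  intros [Hfq Hflim] HB HT Hx HP d Hd.
  destruct (classic (is_rat x)) as [[y0 ->] | Hirr].
  - exists y0. split; [now apply HP|].
    rewrite Hfq. replace (Cminus (f y0) (f y0)) with (RtoC 0) by ring. rewrite Cmod_0. exact Hd.
  - destruct (Hflim B x HB HT Hirr d Hd) as [delta [Hdelta Hlim]].
    destruct (rat_inT_dense B x (Rmin delta (r - Rabs (x - X))) HT Hirr ltac:(apply Rmin_pos; lra))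
      as [y [HyT Hyx]].
    pose proof (Rmin_l delta (r - Rabs (x - X))). pose proof (Rmin_r delta (r - Rabs (x - X))).
    exists y. split; [apply HP; [exact HyT|] | apply Hlim; [exact HyT | lra]].
    replace (qc2R y - X) with (qc2R y - x + (x - X)) by ring.
    pose proof (Rabs_triang (qc2R y - x) (x - X)). lra.
Qed.

Theorem lemma3p3 (f : Qc -> C) :
  (exists lam : R, 1 < lam /\ propS lam f) ->
  (exists fstar : R -> C, is_fstar f fstar) /\
  (forall fstar : R -> C, is_fstar f fstar ->
     forall eps : R, 0 < eps -> exists q0 : nat, forall q : nat,
       (2 <= q)%nat -> (q0 <= q)%nat ->
       forall a : nat, inA q a ->
       forall x : R,
         (INR a - Rpower (INR q) (1/4)) / INR q < x <
           (INR a + Rpower (INR q) (1/4)) / INR q ->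
         (inTq q x \/ in_scaledA q x) ->
         Cmod (Cminus (fstar (INR a / INR q)) (fstar x)) < eps).
Proof.
  intros [lam [Hlam HS]]. split; [exact (fstar_exists f lam Hlam HS)|].
  intros fstar Hfstar eps He.
  destruct (HS (eps / 2) ltac:(lra)) as [M HM].
  destruct (scale_exists lam M Hlam) as [q0 Hq0].
  exists q0. intros q Hq2 Hq a Ha x Hx Hcase.
  destruct (Hq0 q Hq) as [HB [m [HMm [HBm Hcap]]]].
  set (X := INR a / INR q). set (r := Rpower (INR q) (1 / 4) / INR q).
  assert (Hwin := window_inV q a m _ Hq2 Ha ltac:(lra) HBm Hcap). fold X r in Hwin.
  assert (Hxr := Rabs_lt_of_window _ _ _ _ Hx). fold X r in Hxr.
  assert (HxT : inT (Bq q) x) by (destruct Hcase as [[_ [_ HT]] | [a' [[_ [_ HT]] ->]]]; exact HT).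
  destruct (is_rat_ratio a q) as [aq Haq]. fold X in Haq.
  assert (HVa : inV (Rpower (INR m) lam) m X aq).
  { apply Hwin; rewrite <- Haq; [apply Ha|]. rewrite Rminus_diag, Rabs_R0.
    apply Rdiv_lt_0_compat; [apply exp_pos | apply lt_0_INR; lia]. }
  destruct (is_fstar_approx f fstar (Bq q) X r x _ Hfstar HB HxT Hxr Hwin (eps / 2) ltac:(lra))
    as [y [HVy Hy]].
  pose proof (HM m HMm X (inT_mono (Bq q) _ X HBm (proj2 (proj2 Ha))) aq y HVa HVy).
  rewrite Haq, (proj1 Hfstar).
  replace (Cminus (f aq) (fstar x)) with (Cplus (Cminus (f aq) (f y)) (Cminus (f y) (fstar x))) by ring.
  apply Rle_lt_trans with (1 := Cmod_triangle _ _). lra.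
Qed.
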